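(* The ring of integers $\mathbb Z$ has strong avoidance.
   Context: All rings are commutative with $1\neq 0$. A ring map $\phi:R\to S$ has avoidance if whenever $I,I_1,\ldots,I_n$ are ideals of $R$ with $I\subseteq\bigcup_{k=1}^n I_k$, then $IS\subseteq I_kS$ for some $k$. A ring $S$ has strong avoidance if every ring map $R\to S$ has avoidance. *)

From HB Require Import structures.
From mathcomp Require Import all_boot all_order all_algebra.
Set Implicit Arguments. Unset Strict Implicit. Unset Printing Implicit Defensive.
Import GRing.Theory.
Local Open Scope ring_scope.

Definition is_ideal (R : comNzRingType) (I : R -> Prop) : Prop :=
  [/\ I 0,
      (forall x y, I x -> I y -> I (x + y)),
      (forall x, I x -> I (- x)) &
      (forall r x, I x -> I (r * x))].

Definition ext_ideal (R S : comNzRingType) (f : {rmorphism R -> S})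
    (I : R -> Prop) : S -> Prop :=
  fun s => exists (m : nat) (a : 'I_m -> R) (c : 'I_m -> S),
    (forall i, I (a i)) /\ s = \sum_(i < m) c i * f (a i).

Definition has_avoidance (R S : comNzRingType) (f : {rmorphism R -> S}) : Prop :=
  forall (I : R -> Prop) (n : nat) (Is : 'I_n -> R -> Prop),
    is_ideal I -> (forall k, is_ideal (Is k)) ->
    (forall x, I x -> exists k, Is k x) ->
    exists k : 'I_n, forall s, ext_ideal f I s -> ext_ideal f (Is k) s.

Definition strong_avoidance (S : comNzRingType) : Prop :=
  forall (R : comNzRingType) (f : {rmorphism R -> S}), has_avoidance f.

From mathcomp Require Import all_boot all_order all_algebra.
From Stdlib Require Import Classical.
Set Implicit Arguments.
Unset Strict Implicit.
Unset Printing Implicit Defensive.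

Import Order.TTheory GRing.Theory Num.Theory.
Local Open Scope ring_scope.

(* For f : R -> Z, the image of an ideal I is an ideal of Z, hence generated
   by a single value f x0 with x0 in I (Euclid's algorithm run inside I).
   Then I Z is the principal ideal (f x0), and x0 lies in one of the I_k
   covering I, so I Z is contained in I_k Z. *)

Lemma ext_ideal_sub_generator (R S : comNzRingType) (f : {rmorphism R -> S})
    (I J : R -> Prop) (x0 : R) :
  J x0 -> (forall a, I a -> exists t, f a = t * f x0) ->
  forall s, ext_ideal f I s -> ext_ideal f J s.
Proof.
move=> Jx0 dvdI s [m [a [c [Ia ->]]]].
have [t def_fa] := fin_all_exists (fun i => dvdI (a i) (Ia i)).
exists 1%N, (fun=> x0), (fun=> \sum_(i < m) c i * t i); split=> //.
by rewrite big_ord1 mulr_suml; apply: eq_bigr => i _; rewrite def_fa mulrA.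
Qed.

Section IdealImageInt.

Variables (R : comNzRingType) (f : {rmorphism R -> int}) (I : R -> Prop).
Hypothesis idealI : is_ideal I.

Lemma ideal_modz_mem x y : I x -> I y -> exists2 z, I z & f z = (f y %% f x)%Z.
Proof.
have [I0 ID IN IM] := idealI; move=> Ix Iy.
exists (y - (f y %/ f x)%Z%:~R * x); first by apply: ID => //; apply/IN/IM.
rewrite rmorphB rmorphM rmorph_int intz {1}(divz_eq (f y) (f x)).
by rewrite addrAC subrr add0r.
Qed.

Lemma ideal_image_dvd_bounded N x : I x -> f x != 0 -> (`|f x| <= N)%N ->
  exists2 x0, I x0 & forall y, I y -> (f x0 %| f y)%Z.
Proof.
elim: N x => [|N IHN] x Ix fx_neq0 fx_le.
  by rewrite leqn0 absz_eq0 (negbTE fx_neq0) in fx_le.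
have [dvd_fx | /not_all_ex_not[y /(imply_to_and (I y))[Iy ndvd]]] :=
  classic (forall y, I y -> (f x %| f y)%Z); first by exists x.
have [z Iz fz] := ideal_modz_mem Ix Iy.
apply: (IHN z Iz); first by rewrite fz; apply: contra_notN ndvd => /eqP/dvdz_mod0P.
have fz_lt : (`|f z| < `|f x|)%N.
  by rewrite -ltz_nat !abszE fz ger0_norm ?ltz_mod ?modz_ge0.
by rewrite -ltnS (leq_trans fz_lt).
Qed.

Lemma ideal_image_dvd : exists2 x0, I x0 & forall y, I y -> (f x0 %| f y)%Z.
Proof.
have [[x [Ix fx_neq0]] | image0] := classic (exists x, I x /\ f x != 0).
  exact: ideal_image_dvd_bounded Ix fx_neq0 (leqnn _).
have [I0 _ _ _] := idealI; exists 0 => // y Iy.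
by rewrite rmorph0 dvd0z; apply/negPn/negP => fy_neq0; apply: image0; exists y.
Qed.

End IdealImageInt.

Theorem mainTheorem18 : strong_avoidance int.
Proof.
move=> R f I n Is idealI _ cover.
have [x0 Ix0 dvd_fx0] := ideal_image_dvd f idealI.
have [k Ik_x0] := cover x0 Ix0.
exists k; apply: ext_ideal_sub_generator Ik_x0 _ => a Ia.
(* [divzK] also covers [f x0 = 0], since then [0 %| f a] forces [f a = 0]. *)
by exists (f a %/ f x0)%Z; rewrite divzK ?dvd_fx0.
Qed.
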